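(* Let $p$ be a probability rule for stochastic many-worlds theory satisfying Axioms (A1)–(A3). Then for every allowed state $v=\sum_n v_n\lvert n\rangle$ and every $n\ge0$, $p_n(v)=v_n$.
   Context: Stochastic many-worlds theory is defined as follows. The worlds are the vectors $\lvert n\rangle$, $n\in\{0,1,2,\dots\}$, of a countably infinite basis. The allowed states are the real vectors $v=\sum_n v_n\lvert n\rangle$ with $v_n\ge0$ for all $n$ and $\sum_n v_n=1$, where $v_n$ is the amplitude of world $n$. The allowed transformations are the linear maps $T$ with matrix elements $T_{ij}\ge0$ for all $i,j$ and $\sum_i T_{ij}=1$ for every $j$, acting by $(Tv)_i=\sum_j T_{ij}v_j$. A probability rule assigns to each allowed state $v$ a sequence $(p_n(v))_{n\ge 0}$ of nonnegative reals with $\sum_n p_n(v)=1$. The axioms are: (A1) Present state dependence: $p_n$ depends only on the present state $v$, so $p$ is a function of the state alone. (A2) Weak connection with amplitudes: for every allowed state $v$, $v_n=0$ implies $p_n(v)=0$. (A3) Weak connection with transformations: for every allowed state $v$ and allowed transformation $T$, and every partition of $\{0,1,2,\dots\}$ into subsets $\mathcal S_k$ such that $T_{ij}=0$ whenever $i$ and $j$ lie in different subsets, we have $\sum_{n\in\mathcal S_k}p_n(v)=\sum_{n\in\mathcal S_k}p_n(Tv)$ for every $k$. *)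

From Stdlib Require Import Reals Arith.
From Coquelicot Require Import Coquelicot.
Open Scope R_scope.

(* A vector in the world basis {|n>}: its sequence of real amplitudes. *)
Definition vec := nat -> R.

Definition allowed_state (v : vec) : Prop :=
  (forall n, 0 <= v n) /\ is_series v 1.

Definition allowed_transf (T : nat -> nat -> R) : Prop :=
  (forall i j, 0 <= T i j) /\ (forall j, is_series (fun i => T i j) 1).

(* Action (T v)_i = sum_j T_ij v_j  (the series converges for allowed T, v). *)
Definition act (T : nat -> nat -> R) (v : vec) : vec :=
  fun i => Series (fun j => T i j * v j).

(* A probability rule (A1: a function of the present state only):
   to each allowed state it assigns a nonnegative sequence summing to 1. *)
Definition prob_rule (p : vec -> nat -> R) : Prop :=
  forall v, allowed_state v -> (forall n, 0 <= p v n) /\ is_series (p v) 1.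

Definition weak_amp (p : vec -> nat -> R) : Prop :=
  forall v, allowed_state v -> forall n, v n = 0 -> p v n = 0.

Definition block_sum (q : nat -> R) (c : nat -> nat) (k : nat) : R :=
  Series (fun n => if Nat.eqb (c n) k then q n else 0).

(* (A3): partitions of N are encoded by a block-labelling c : nat -> nat
   (S_k = { n | c n = k }); every partition of N arises this way since it
   has at most countably many nonempty blocks. *)
Definition weak_transf (p : vec -> nat -> R) : Prop :=
  forall v T (c : nat -> nat),
    allowed_state v -> allowed_transf T ->
    (forall i j, c i <> c j -> T i j = 0) ->
    forall k, block_sum (p v) c k = block_sum (p (act T v)) c k.

(* Deterministic transformations ("moves" j |-> f j) are allowed,
   and A3 says they preserve the total probability of every block of worlds
   that they leave invariant.
   1. Moving all worlds other than n onto world n+1 keeps the block {n}, so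
      p_n(v) equals the marginal g_n(x) := p_n of the two-world state with
      amplitude x = v_n on n and 1 - x on n+1.
   2. Merging world m into world n (block {n,m}) in a three-world state shows
      g_n(x) + g_m(y) = g_n(x+y); with x = 0 and A2 the marginal does not
      depend on the world, so g := g_0 is additive on [0,1].
   3. g is nonnegative and g(1) = 1 by A2 and normalisation; the bounded
      Cauchy equation then forces g(x) = x, whence p_n(v) = v_n. *)

From Stdlib Require Import Reals Lra Lia List FunctionalExtensionality.
From Coquelicot Require Import Coquelicot.
Import ListNotations.
Open Scope R_scope.

Ltac case_worlds :=
  repeat match goal with
  | |- context [Nat.eqb ?a ?b] =>
      assert_fails (idtac; match a with context [Nat.eqb _ _] => idtac end);
      assert_fails (idtac; match b with context [Nat.eqb _ _] => idtac end);
      destruct (Nat.eqb_spec a b)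
  end.

Ltac solve_nodup := repeat constructor; simpl; intuition lia.

Ltac solve_support := intros ? Hnotin; simpl in Hnotin; case_worlds;
  try (exfalso; apply Hnotin; subst; intuition auto; fail); first [lra | exfalso; lia].

Definition point (h : nat) (c : R) : nat -> R :=
  fun j => if Nat.eqb j h then c else 0.

Lemma sum_n_point (h : nat) (c : R) (N : nat) :
  sum_n (point h c) N = if Nat.leb h N then c else 0.
Proof.
  induction N as [|N IH].
  - rewrite sum_O. unfold point. destruct h; reflexivity.
  - rewrite sum_Sn, IH. unfold point. change plus with Rplus.
    destruct (Nat.leb_spec h N), (Nat.leb_spec h (S N)), (Nat.eqb_spec (S N) h);
      try lia; lra.
Qed.

Lemma is_series_point (h : nat) (c : R) : is_series (point h c) c.
Proof.
  apply filterlim_ext_loc with (fun _ => c); [|apply filterlim_const].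
  exists h. intros N HN. rewrite sum_n_point.
  destruct (Nat.leb_spec h N); [reflexivity | lia].
Qed.

Lemma is_series_finite (l : list nat) (a : nat -> R) :
  NoDup l -> (forall j, ~ In j l -> a j = 0) ->
  is_series a (fold_right Rplus 0 (map a l)).
Proof.
  revert a. induction l as [|h l IH]; intros a Hnd Hsupp; simpl.
  - apply is_series_ext with (point 0 0); [|apply is_series_point].
    intros j. rewrite Hsupp by auto. unfold point. case_worlds; reflexivity.
  - inversion_clear Hnd as [|? ? Hh Hnd'].
    set (rest := fun j => if Nat.eqb j h then 0 else a j).
    assert (Hrest : map rest l = map a l).
    { apply map_ext_in. intros j Hj. unfold rest. case_worlds; congruence. }
    rewrite <- Hrest.
    apply is_series_ext with (fun j => point h (a h) j + rest j).
    { intros j. unfold rest, point. case_worlds; subst; lra. }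
    apply (is_series_plus (point h (a h)) rest); [apply is_series_point|].
    apply IH; [exact Hnd'|].
    intros j Hj. unfold rest. case_worlds; [reflexivity|].
    apply Hsupp. simpl. intuition.
Qed.

Lemma series_finite (l : list nat) (a : nat -> R) (s : R) :
  NoDup l -> (forall j, ~ In j l -> a j = 0) ->
  fold_right Rplus 0 (map a l) = s -> Series a = s.
Proof.
  intros Hnd Hsupp <-. apply is_series_unique, is_series_finite; assumption.
Qed.
Section AdditiveOnUnitInterval.

Variable f : R -> R.
Hypothesis f_nonneg : forall x, 0 <= x <= 1 -> 0 <= f x.
Hypothesis f_add : forall x y, 0 <= x -> 0 <= y -> x + y <= 1 -> f x + f y = f (x + y).
Hypothesis f_one : f 1 = 1.

Lemma additive_zero : f 0 = 0.
Proof. pose proof (f_add 0 0) as H. rewrite Rplus_0_r in H. lra. Qed.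

Lemma additive_monotone x y : 0 <= x -> x <= y -> y <= 1 -> f x <= f y.
Proof.
  intros Hx Hxy Hy. replace y with (x + (y - x)) by ring.
  rewrite <- f_add by lra. assert (0 <= f (y - x)) by (apply f_nonneg; lra). lra.
Qed.

Lemma additive_multiple (N k : nat) : (0 < N)%nat -> (k <= N)%nat ->
  f (INR k / INR N) = INR k * f (1 / INR N).
Proof.
  intros HN. assert (HN' : 0 < INR N) by (apply lt_0_INR; lia).
  induction k as [|k IH]; intros Hk.
  - simpl. unfold Rdiv. rewrite Rmult_0_l, additive_zero. ring.
  - assert (HkN : INR (S k) <= INR N) by (apply le_INR; lia).
    assert (Hk0 : 0 <= INR k) by apply pos_INR.
    rewrite S_INR in HkN |- *.
    replace ((INR k + 1) / INR N) with (INR k / INR N + 1 / INR N) by (field; lra).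
    rewrite <- f_add.
    + rewrite IH by lia. ring.
    + apply Rmult_le_pos; [lra | left; apply Rinv_0_lt_compat; lra].
    + apply Rmult_le_pos; [lra | left; apply Rinv_0_lt_compat; lra].
    + apply Rmult_le_reg_r with (INR N); [lra|]. field_simplify; lra.
Qed.

Lemma additive_rational (N k : nat) : (0 < N)%nat -> (k <= N)%nat ->
  f (INR k / INR N) = INR k / INR N.
Proof.
  intros HN Hk. assert (HN' : 0 < INR N) by (apply lt_0_INR; lia).
  assert (Hunit : f (1 / INR N) = / INR N).
  { pose proof (additive_multiple N N HN (le_n _)) as H.
    replace (INR N / INR N) with 1 in H by (field; lra).
    apply Rmult_eq_reg_l with (INR N); [|lra]. rewrite <- H, f_one. field; lra. }
  rewrite additive_multiple, Hunit by assumption. unfold Rdiv. ring.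
Qed.

(* Comparing x with the grid point floor (N x) / N just below it. *)
Lemma additive_lower_bound (N : nat) x : (0 < N)%nat -> 0 <= x <= 1 ->
  x - / INR N <= f x.
Proof.
  intros HN Hx. assert (HN' : 0 < INR N) by (apply lt_0_INR; lia).
  destruct (nfloor_ex (x * INR N)) as [k [Hk1 Hk2]]; [apply Rmult_le_pos; lra|].
  assert (HkN : (k <= N)%nat) by (apply INR_le; nra).
  assert (Hgrid : INR k / INR N <= x).
  { apply Rmult_le_reg_r with (INR N); [lra|]. field_simplify; lra. }
  assert (x - / INR N <= INR k / INR N).
  { apply Rmult_le_reg_r with (INR N); [lra|]. field_simplify; lra. }
  assert (f (INR k / INR N) <= f x).
  { apply additive_monotone; try lra.
    apply Rmult_le_pos; [apply pos_INR | left; apply Rinv_0_lt_compat; lra]. }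
  rewrite additive_rational in * by assumption.
  lra.
Qed.

(* The upper bound follows from the lower one applied to 1 - x. *)
Lemma additive_identity x : 0 <= x <= 1 -> f x = x.
Proof.
  intros Hx. apply Req_le_aux. intros eps.
  destruct (archimed_cor1 eps (cond_pos eps)) as [N [HNeps HN]].
  pose proof (additive_lower_bound N x HN Hx).
  pose proof (additive_lower_bound N (1 - x) HN ltac:(lra)).
  pose proof (f_add x (1 - x)) as Hsum. replace (x + (1 - x)) with 1 in Hsum by ring.
  apply Rabs_le. lra.
Qed.

End AdditiveOnUnitInterval.

Lemma allowed_finite (l : list nat) (v : vec) :
  NoDup l -> (forall j, ~ In j l -> v j = 0) -> (forall j, 0 <= v j) ->
  fold_right Rplus 0 (map v l) = 1 -> allowed_state v.
Proof.
  intros Hnd Hsupp Hpos Hsum. split; [exact Hpos|].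
  rewrite <- Hsum. apply is_series_finite; assumption.
Qed.

Lemma amplitude_le_1 (v : vec) (n : nat) : allowed_state v -> 0 <= v n <= 1.
Proof.
  intros [Hpos Hsum]. split; [apply Hpos|].
  rewrite <- (is_series_unique _ _ Hsum), <- (is_series_unique _ _ (is_series_point n (v n))).
  apply Series_le; [|exists 1; exact Hsum].
  intros j. unfold point. case_worlds; subst; split; auto with real.
Qed.

Definition move (f : nat -> nat) : nat -> nat -> R :=
  fun i j => if Nat.eqb i (f j) then 1 else 0.

Lemma move_allowed (f : nat -> nat) : allowed_transf (move f).
Proof.
  split.
  - intros i j. unfold move. case_worlds; lra.
  - intros j. apply is_series_ext with (point (f j) 1); [|apply is_series_point].
    intros i. unfold move, point. case_worlds; congruence.
Qed.

Lemma act_move (f : nat -> nat) (v : vec) (i : nat) :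
  act (move f) v i = Series (fun j => if Nat.eqb i (f j) then v j else 0).
Proof.
  unfold act, move. f_equal. apply functional_extensionality. intros j.
  case_worlds; ring.
Qed.

Lemma weak_transf_move (p : vec -> nat -> R) (f c : nat -> nat) (v : vec) (k : nat) :
  weak_transf p -> allowed_state v -> (forall j, c (f j) = c j) ->
  block_sum (p v) c k = block_sum (p (act (move f) v)) c k.
Proof.
  intros Htransf Hv Hblocks. apply Htransf; [exact Hv | apply move_allowed |].
  intros i j Hij. unfold move. destruct (Nat.eqb_spec i (f j)) as [->|]; [|reflexivity].
  exfalso. exact (Hij (Hblocks j)).
Qed.

Lemma block_sum_finite (q : nat -> R) (c : nat -> nat) (k : nat) (l : list nat) :
  NoDup l -> (forall i, c i = k <-> In i l) ->
  block_sum q c k = fold_right Rplus 0 (map q l).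
Proof.
  intros Hnd Hblock. unfold block_sum. apply series_finite with l; [exact Hnd | |].
  - intros j Hj. destruct (Nat.eqb_spec (c j) k) as [Hc|]; [|reflexivity].
    exfalso. exact (Hj (proj1 (Hblock j) Hc)).
  - f_equal. apply map_ext_in. intros j Hj.
    destruct (Nat.eqb_spec (c j) k) as [|Hc]; [reflexivity|].
    exfalso. exact (Hc (proj2 (Hblock j) Hj)).
Qed.

Definition pair_state (n : nat) (x : R) : vec :=
  fun i => if Nat.eqb i n then x else if Nat.eqb i (S n) then 1 - x else 0.

Lemma pair_state_allowed (n : nat) (x : R) : 0 <= x <= 1 -> allowed_state (pair_state n x).
Proof.
  intros Hx. apply allowed_finite with [n; S n]; [solve_nodup | | |].
  - unfold pair_state. solve_support.
  - intros j. unfold pair_state. case_worlds; lra.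
  - simpl. unfold pair_state. case_worlds; lia || lra.
Qed.

Section ProbabilityRule.

Variable p : vec -> nat -> R.
Hypothesis p_rule : prob_rule p.
Hypothesis p_amp : weak_amp p.
Hypothesis p_transf : weak_transf p.

Definition marginal (n : nat) (x : R) : R := p (pair_state n x) n.

(* Moving every world other than n onto world n + 1 keeps the block {n}
   and turns v into pair_state n (v n); so p_n(v) depends on v_n only. *)
Lemma prob_is_marginal (v : vec) (n : nat) : allowed_state v -> p v n = marginal n (v n).
Proof.
  intros Hv.
  set (f := fun j => if Nat.eqb j n then n else S n).
  set (c := fun i => if Nat.eqb i n then 0%nat else 1%nat).
  assert (Hblocks : forall j, c (f j) = c j) by (intros j; unfold c, f; case_worlds; lia).
  assert (Hact : act (move f) v = pair_state n (v n)).
  { apply functional_extensionality. intros i. rewrite act_move. unfold pair_state, f.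
    destruct (Nat.eqb_spec i n) as [->|Hin]; [|destruct (Nat.eqb_spec i (S n)) as [->|HiS]].
    - apply series_finite with [n]; [solve_nodup | solve_support | simpl; case_worlds; lia || lra].
    - apply is_series_unique.
      apply is_series_ext with (fun j => v j - point n (v n) j).
      { intros j. unfold point. case_worlds; subst; lia || lra. }
      apply (is_series_minus v); [apply Hv | apply is_series_point].
    - apply series_finite with (@nil nat); [solve_nodup | solve_support | reflexivity]. }
  assert (Hblock_n : forall q, block_sum q c 0 = q n + 0).
  { intros q. rewrite (block_sum_finite q c 0 [n]); [reflexivity | solve_nodup |].
    intros i. unfold c. simpl. case_worlds; intuition lia. }
  pose proof (weak_transf_move p f c v 0 p_transf Hv Hblocks) as H.
  rewrite Hact, !Hblock_n in H. unfold marginal. lra.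
Qed.

(* Merging world m into world n (inside the block {n, m}) adds the
   amplitudes, so the marginal is additive across distinct worlds. *)
Lemma marginal_additive (n m : nat) (x y : R) : n <> m -> 0 <= x -> 0 <= y -> x + y <= 1 ->
  marginal n x + marginal m y = marginal n (x + y).
Proof.
  intros Hnm Hx Hy Hxy. set (k := S (n + m)).
  assert (Hkn : k <> n) by (unfold k; lia). assert (Hkm : k <> m) by (unfold k; lia).
  set (w := fun i => if Nat.eqb i n then x else if Nat.eqb i m then y
                     else if Nat.eqb i k then 1 - x - y else 0).
  set (w' := fun i => if Nat.eqb i n then x + y else if Nat.eqb i k then 1 - x - y else 0).
  assert (Hw : allowed_state w).
  { apply allowed_finite with [n; m; k]; [solve_nodup | unfold w; solve_support | |].
    - intros j. unfold w. case_worlds; lra.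
    - simpl. unfold w. case_worlds; lia || lra. }
  assert (Hw' : allowed_state w').
  { apply allowed_finite with [n; k]; [solve_nodup | unfold w'; solve_support | |].
    - intros j. unfold w'. case_worlds; lra.
    - simpl. unfold w'. case_worlds; lia || lra. }
  set (f := fun j => if Nat.eqb j m then n else j).
  set (c := fun i => if (Nat.eqb i n || Nat.eqb i m)%bool then 0%nat else 1%nat).
  assert (Hblocks : forall j, c (f j) = c j) by (intros j; unfold c, f; case_worlds; simpl; lia).
  assert (Hact : act (move f) w = w').
  { apply functional_extensionality. intros i. rewrite act_move.
    apply series_finite with [n; m; k]; [solve_nodup | unfold w; solve_support |].
    simpl. unfold w, w', f. case_worlds; lia || lra. }
  assert (Hblock_nm : forall q, block_sum q c 0 = q n + (q m + 0)).
  { intros q. rewrite (block_sum_finite q c 0 [n; m]); [reflexivity | solve_nodup |].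
    intros i. unfold c. simpl. case_worlds; simpl; intuition lia. }
  pose proof (weak_transf_move p f c w 0 p_transf Hw Hblocks) as H.
  rewrite Hact, !Hblock_nm in H.
  rewrite (p_amp w' Hw' m) in H by (unfold w'; case_worlds; lia || lra).
  rewrite !prob_is_marginal in H by assumption.
  replace (w n) with x in H by (unfold w; case_worlds; lia || lra).
  replace (w m) with y in H by (unfold w; case_worlds; lia || lra).
  replace (w' n) with (x + y) in H by (unfold w'; case_worlds; lia || lra).
  lra.
Qed.

(* Adding a zero amplitude elsewhere shows the marginal does not depend on the world. *)
Lemma marginal_world_independent (n m : nat) (y : R) : 0 <= y <= 1 ->
  marginal m y = marginal n y.
Proof.
  intros Hy. destruct (Nat.eq_dec n m) as [->|Hnm]; [reflexivity|].
  assert (Hzero : marginal n 0 = 0).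
  { apply p_amp; [apply pair_state_allowed; lra | unfold pair_state; case_worlds; lia || lra]. }
  pose proof (marginal_additive n m 0 y Hnm ltac:(lra) ltac:(lra) ltac:(lra)) as H.
  rewrite Rplus_0_l in H. lra.
Qed.

(* In the state concentrated on world 0, A2 leaves all probability on world 0. *)
Lemma marginal_one : marginal 0 1 = 1.
Proof.
  assert (Hu : allowed_state (pair_state 0 1)) by (apply pair_state_allowed; lra).
  destruct (p_rule _ Hu) as [_ Hsum].
  transitivity (Series (p (pair_state 0 1))); [symmetry | exact (is_series_unique _ _ Hsum)].
  apply series_finite with [0%nat]; [solve_nodup | | unfold marginal; simpl; ring].
  intros j Hj. apply p_amp; [exact Hu|]. simpl in Hj.
  unfold pair_state. case_worlds; [exfalso; apply Hj; auto | lra | reflexivity].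
Qed.

Lemma marginal_identity (n : nat) (x : R) : 0 <= x <= 1 -> marginal n x = x.
Proof.
  intros Hx. rewrite (marginal_world_independent 0 n x Hx).
  apply additive_identity; [| | exact marginal_one | exact Hx].
  - intros z Hz. apply (p_rule _ (pair_state_allowed 0 z Hz)).
  - intros z t Hz Ht Hzt.
    rewrite <- (marginal_world_independent 0 1 t ltac:(lra)).
    apply marginal_additive; auto.
Qed.

End ProbabilityRule.

Theorem theorem4 (p : vec -> nat -> R) :
  prob_rule p -> weak_amp p -> weak_transf p ->
  forall v : vec, allowed_state v -> forall n : nat, p v n = v n.
Proof.
  intros Hrule Hamp Htransf v Hv n.
  rewrite (prob_is_marginal p Htransf v n Hv).
  apply (marginal_identity p Hrule Hamp Htransf), amplitude_le_1, Hv.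
Qed.
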